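(* Let $h>s>0$, $w_1,w_2>0$ and $t\in[0,w_2)$. Let $P_1$ be the flat surface with boundary obtained from the rectangle $[0,w_1]\times[0,h]$ by gluing $(x,h)\sim(x,0)$ for $x\in[0,w_1]$ and $(0,y)\sim(w_1,y)$ for $y\in[s,h]$, the segments $\{0\}\times[0,s]$ and $\{w_1\}\times[0,s]$ being left unglued (they form the slit). Let $P_2$ be obtained from $[0,w_2]\times[0,h]$ by gluing $(x,h)\sim(x+t \bmod w_2,\,0)$ for $x\in[0,w_2]$ and $(0,y)\sim(w_2,y)$ for $y\in[s,h]$, with $\{0\}\times[0,s]$ and $\{w_2\}\times[0,s]$ unglued. Suppose $\mathrm{Area}(P_1)\ge\mathrm{Area}(P_2)$, and that for every cylinder $L_1$ on $P_1$ there is a cylinder $L_2$ on $P_2$ of the same slope with $\frac{\mathrm{Area}(L_1)}{\mathrm{Area}(P_1)}=\frac{\mathrm{Area}(L_2)}{\mathrm{Area}(P_2)}$. Then $P_2$ is isometric to $P_1$.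
   Context: A cylinder on $P_i$ is a maximal open subset of the interior of $P_i$ isometric (by a translation-structure-preserving isometry) to a Euclidean cylinder $(\mathbb{R}/c\mathbb{Z})\times(0,\eta)$; its slope is the direction of its core curves. *)

From HB Require Import structures.
From mathcomp Require Import all_boot all_order all_algebra.
From mathcomp Require Import boolp classical_sets reals.
Set Implicit Arguments. Unset Strict Implicit. Unset Printing Implicit Defensive.
Import Order.TTheory GRing.Theory Num.Theory.
Local Open Scope ring_scope.
Local Open Scope classical_set_scope.

(* Slit surface P(w,h,s,t): the rectangle [0,w]x[0,h] with (x,h) ~ (x+t mod w, 0)
   and (0,y) ~ (w,y) for y in [s,h], the two sides {0}x[0,s], {w}x[0,s] unglued.
   These identifications are exactly the translations by the lattice
   Lambda = Z(w,0) + Z(t,h) on the boundary of the fundamental domain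
   [0,w]x[0,h], so the interior of P is the flat torus R^2/Lambda minus the
   (closed) slit segment {0}x[0,s].  Points of the interior of P are
   represented by their lifts in R^2 (points that are [allowed]), two lifts
   representing the same point iff they are [equiv]. *)

Section SlitSurface.
Variable R : realType.
Implicit Types (w h s t : R) (p q : R * R).

Definition lattice w h t p : Prop :=
  exists m n : int, p.1 = m%:~R * w + n%:~R * t /\ p.2 = n%:~R * h.

Definition equiv w h t p q : Prop := lattice w h t (p.1 - q.1, p.2 - q.2).

Definition slit s p : Prop := p.1 = 0 /\ 0 <= p.2 <= s.

Definition allowed w h s t p : Prop :=
  ~ (exists l, lattice w h t l /\ slit s (p.1 - l.1, p.2 - l.2)).

Definition edist p q : R := Num.sqrt ((p.1 - q.1) ^+ 2 + (p.2 - q.2) ^+ 2).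

Definition seg_in (A : set (R * R)) p q : Prop :=
  forall u : R, 0 <= u <= 1 -> A (p.1 + u * (q.1 - p.1), p.2 + u * (q.2 - p.2)).

Fixpoint poly_in (A : set (R * R)) p (ps : seq (R * R)) : Prop :=
  if ps is q :: ps' then seg_in A p q /\ poly_in A q ps' else True.

Fixpoint poly_len p (ps : seq (R * R)) : R :=
  if ps is q :: ps' then edist p q + poly_len q ps' else 0.

Definition pdist w h s t x y : R :=
  inf [set len | exists (ps : seq (R * R)) (l : R * R),
         [/\ poly_in (allowed w h s t) x ps, lattice w h t l,
             last x ps = (y.1 + l.1, y.2 + l.2) & len = poly_len x ps]].

(* P(w2,h2,s2,t2) is isometric to P(w1,h1,s1,t1): a bijection between the
   interiors preserving the intrinsic distance (it then extends uniquely to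
   an isometry of the surfaces with boundary, their metric completions). *)
Definition isometric w2 h2 s2 t2 w1 h1 s1 t1 : Prop :=
  exists f : R * R -> R * R,
  [/\ forall x, allowed w2 h2 s2 t2 x -> allowed w1 h1 s1 t1 (f x),
      forall x y, allowed w2 h2 s2 t2 x -> allowed w2 h2 s2 t2 y ->
        (equiv w1 h1 t1 (f x) (f y) <-> equiv w2 h2 t2 x y),
      forall z, allowed w1 h1 s1 t1 z ->
        exists x, allowed w2 h2 s2 t2 x /\ equiv w1 h1 t1 (f x) z
    & forall x y, allowed w2 h2 s2 t2 x -> allowed w2 h2 s2 t2 y ->
        pdist w1 h1 s1 t1 (f x) (f y) = pdist w2 h2 s2 t2 x y].

Definition strip (p v : R * R) (eta : R) : set (R * R) :=
  [set z | exists a b : R, 0 < b < eta /\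
     z = (p.1 + a * v.1 - b * v.2, p.2 + a * v.2 + b * v.1)].

(* C (a set of lifts, i.e. a subset of the interior) is the image of a
   translation-structure-preserving isometric embedding of the Euclidean
   cylinder (R / cZ) x (0,eta) whose core curves have direction v (unit):
   the embedding is (a,b) |-> [p + a v + b v^perp]. *)
Definition cyl_embedded w h s t (C : set (R * R)) (v : R * R) (c eta : R) : Prop :=
  v.1 ^+ 2 + v.2 ^+ 2 = 1 /\ 0 < c /\ 0 < eta /\
  exists p : R * R,
  [/\ strip p v eta `<=` allowed w h s t,
      (forall x y, strip p v eta x -> strip p v eta y ->
         (equiv w h t x y <-> exists k : int, x.1 - y.1 = k%:~R * c * v.1
                                           /\ x.2 - y.2 = k%:~R * c * v.2))
    & C = [set z | exists x, strip p v eta x /\ equiv w h t z x]].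

(* a cylinder: a maximal such subset; its slope is the direction v of the core
   curves, its area is c * eta *)
Definition cylinder w h s t (C : set (R * R)) (v : R * R) (c eta : R) : Prop :=
  cyl_embedded w h s t C v c eta /\
  forall C' v' c' eta', cyl_embedded w h s t C' v' c' eta' -> C `<=` C' -> C' = C.

Definition same_slope (v1 v2 : R * R) : Prop := v1.1 * v2.2 - v1.2 * v2.1 = 0.

(* area of P(w,h,s,t) (the slit has measure zero) *)
Definition area_surf w h : R := w * h.

End SlitSurface.

(* On P1 = P(w1,h,s,0) the diagonals of the rectangle above the slit close up into a
   cylinder of slope (w1,h) and area w1 (h - s), so P2 has a cylinder of that slope and of
   area w2 (h - s).  The core of any cylinder of P(w,h,s,t) closes up along a primitive
   lattice vector (m w + n t, n h); transversally to the core, the lattice translates of the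
   slit are intervals of width s |m w + n t| / c repeating with period w h / c, and the
   cylinder fits between two of them, so its area plus s |m w + n t| is at most w h.  For
   P2 the slope forces m w2 + n t = n w1, whence |n| w1 <= w2 <= w1: so |n| = 1, w2 = w1,
   and finally t = 0 because 0 <= t < w2. *)

From Pilot Require Import Defs.
From mathcomp Require Import all_boot all_order all_algebra.
From mathcomp Require Import classical_sets reals.
From mathcomp Require Import zify ring lra.
Import Order.TTheory GRing.Theory Num.Theory.
Local Open Scope ring_scope.

Section Arithmetic.
Context {R : realType}.
Implicit Types (a d l s u v eta : R).

Lemma exists_floor_mul {d} a : 0 < d -> exists k : int, k%:~R * d <= a < k%:~R * d + d.
Proof.
move=> d0; exists (Num.floor (a / d)).
have f1 := floor_le (a / d); have := floorD1_gt (a / d); rewrite intrD => f2.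
have ad : a / d * d = a by rewrite divfK ?gt_eqF.
by apply/andP; split; nra.
Qed.

Lemma int_multiple_small_eq0 d (k : int) : 0 < d -> `|k%:~R * d| < d -> k = 0.
Proof.
move=> d0; rewrite normrM (gtr0_norm d0) -[X in _ < X]mul1r ltr_pM2r //.
by rewrite -intr_norm ltrz1; lia.
Qed.

Lemma shear_rigid {w1 w2 t : R} {m n : int} : 0 < w1 -> 0 <= t -> t < w2 -> w2 <= w1 ->
  n != 0 -> `|n%:~R * w1| <= w2 -> n%:~R * w1 = m%:~R * w2 + n%:~R * t ->
  w2 = w1 /\ t = 0.
Proof.
move=> w10 t0 tw2 w21 n0 nw e.
have n1 : `|n| = 1.
  suff : `|n| <= 1 by lia.
  rewrite -(ler_int R) intr_norm -(ler_pM2r w10) mul1r -(gtr0_norm w10) -normrM.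
  by rewrite (gtr0_norm w10); apply: le_trans w21.
have ew : w2 = w1.
  apply: le_anti; rewrite w21 /=; apply: le_trans nw.
  by rewrite normrM -intr_norm n1 mulr1z mul1r gtr0_norm.
split=> //; rewrite ew in e tw2.
have nn : n * n = 1 by have [->|->] : n = 1 \/ n = -1 by lia.
have tk : t = (n * (n - m))%:~R * w1.
  have e' : n%:~R * t = n%:~R * w1 - m%:~R * w1 by rewrite e; ring.
  transitivity ((n * n)%:~R * t); first by rewrite nn mulr1z mul1r.
  by rewrite !intrM intrB -mulrA e'; ring.
have /int_multiple_small_eq0 k0 : `|(n * (n - m))%:~R * w1| < w1 by rewrite -tk ger0_norm.
by rewrite tk k0 // mul0r.
Qed.

Lemma mul_interval_onto s v u : 0 <= s -> 0 <= u <= s * `|v| ->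
  exists2 y, 0 <= y <= s & y * v = Num.min 0 (s * v) + u.
Proof.
move=> s0 /andP [u0 us].
have [v0|v0|v0] := ltrgtP v 0; last first.
- rewrite v0 normr0 mulr0 in us *.
  by exists 0; rewrite ?lexx // mul0r minxx add0r; lra.
- have yv : u / v * v = u by rewrite divfK ?gt_eqF.
  exists (u / v); last by rewrite min_l ?add0r // mulr_ge0 //; lra.
  move: us; rewrite gtr0_norm // => us; apply/andP; split; nra.
- have yv : u / v * v = u by rewrite divfK ?lt_eqF.
  exists (s + u / v); last by rewrite min_r ?mulrDl ?yv //; nra.
  move: us; rewrite ltr0_norm // => us; apply/andP; split; nra.
Qed.

Lemma progression_gap_le a d l eta : 0 < d -> 0 < eta -> 0 <= l ->
  (forall (j : int) u, 0 <= u <= l -> ~ (a < j%:~R * d + u < a + eta)) ->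
  eta + l <= d.
Proof.
move=> d0 e0 l0 avoid.
have [F /andP [F1 F2]] := exists_floor_mul a d0.
have [Fl_le|a_lt] := lerP (F%:~R * d + l) a; last first.
  exfalso; have [e_le|e_gt] := lerP eta (F%:~R * d + l - a).
    by apply: (avoid F (a - F%:~R * d + eta / 2)); apply/andP; split; lra.
  by apply: (avoid F l); apply/andP; split; lra.
rewrite leNgt; apply/negP => gt_d.
by apply: (avoid (F + 1) 0); rewrite ?lexx // intrD mulrDl mul1r; apply/andP; split; lra.
Qed.

End Arithmetic.

Local Open Scope classical_set_scope.

Section Plane.
Context {R : realType}.
Implicit Types (w h s t : R) (p q u v x y z l : R * R).

Definition cross p q : R := p.1 * q.2 - p.2 * q.1.

Lemma crossB v x y : cross v (x.1 - y.1, x.2 - y.2) = cross v x - cross v y.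
Proof. rewrite /cross /=; ring. Qed.

Lemma cross_lattice w h t (m n m' n' : int) :
  cross (m%:~R * w + n%:~R * t, n%:~R * h) (m'%:~R * w + n'%:~R * t, n'%:~R * h)
  = (m * n' - n * m')%:~R * (w * h).
Proof. rewrite /cross /= intrB !intrM; ring. Qed.

Lemma cross_parallel u v q : u.1 ^+ 2 + u.2 ^+ 2 = 1 -> cross u v = 0 ->
  cross v q = (u.1 * v.1 + u.2 * v.2) * cross u q.
Proof.
move=> uu uv.
have -> : cross v q = cross v q * (u.1 ^+ 2 + u.2 ^+ 2) by rewrite uu mulr1.
have -> : cross v q * (u.1 ^+ 2 + u.2 ^+ 2)
  = (u.1 * v.1 + u.2 * v.2) * cross u q - cross u v * (u.1 * q.1 + u.2 * q.2)
  by rewrite /cross; ring.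
by rewrite uv mul0r subr0.
Qed.

Lemma scaled_unit_eq0 c v : v.1 ^+ 2 + v.2 ^+ 2 = 1 ->
  c * v.1 = 0 -> c * v.2 = 0 -> c = 0.
Proof.
move=> vu c1 c2; have : (c * v.1) ^+ 2 + (c * v.2) ^+ 2 = c ^+ 2.
  by rewrite !exprMn -mulrDr vu mulr1.
by rewrite c1 c2 expr0n addr0 => /esym /eqP; rewrite sqrf_eq0 => /eqP.
Qed.

Lemma strip_cross p v eta x : v.1 ^+ 2 + v.2 ^+ 2 = 1 ->
  strip p v eta x <-> 0 < cross v x - cross v p < eta.
Proof.
move=> vu; split.
  move=> [a [b [hb ->]]].
  have -> : cross v (p.1 + a * v.1 - b * v.2, p.2 + a * v.2 + b * v.1) - cross v p
          = b * (v.1 ^+ 2 + v.2 ^+ 2) by rewrite /cross /=; ring.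
  by rewrite vu mulr1.
move=> hb; exists ((x.1 - p.1) * v.1 + (x.2 - p.2) * v.2), (cross v x - cross v p).
split=> //; case: x hb => x1 x2 /= _; congr (_, _); apply/eqP; rewrite -subr_eq0.
  suff -> : x1 - (p.1 + ((x1 - p.1) * v.1 + (x2 - p.2) * v.2) * v.1 -
      (cross v (x1, x2) - cross v p) * v.2) = (x1 - p.1) * (1 - (v.1 ^+ 2 + v.2 ^+ 2)).
    by rewrite vu subrr mulr0.
  by rewrite /cross /=; ring.
suff -> : x2 - (p.2 + ((x1 - p.1) * v.1 + (x2 - p.2) * v.2) * v.2 +
    (cross v (x1, x2) - cross v p) * v.1) = (x2 - p.2) * (1 - (v.1 ^+ 2 + v.2 ^+ 2)).
  by rewrite vu subrr mulr0.
by rewrite /cross /=; ring.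
Qed.

Lemma lattice0 w h t : lattice w h t (0, 0).
Proof. by exists 0, 0; rewrite !mul0r addr0. Qed.

Lemma latticeB w h t l l' : lattice w h t l -> lattice w h t l' ->
  lattice w h t (l.1 - l'.1, l.2 - l'.2).
Proof.
move=> [m [n [-> ->]]] [m' [n' [-> ->]]]; exists (m - m'), (n - n').
by rewrite /= !intrB; split; ring.
Qed.

Lemma equiv_refl w h t x : Defs.equiv w h t x x.
Proof. by rewrite /Defs.equiv !subrr; apply: lattice0. Qed.

Lemma lattice_coord_eq0 w h t (m n : int) : w != 0 -> h != 0 ->
  m%:~R * w + n%:~R * t = 0 -> n%:~R * h = 0 -> m = 0 /\ n = 0.
Proof.
move=> w0 h0 e1 /eqP; rewrite mulf_eq0 (negbTE h0) orbF intr_eq0 => /eqP n0.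
move: e1; rewrite n0 mul0r addr0 => /eqP; rewrite mulf_eq0 (negbTE w0) orbF.
by rewrite intr_eq0 => /eqP.
Qed.

Lemma allowed_latticeD w h s t x l : lattice w h t l ->
  allowed w h s t (x.1 - l.1, x.2 - l.2) -> allowed w h s t x.
Proof.
move=> hl ax [l' [hl' sl]]; apply: ax; exists (l'.1 - l.1, l'.2 - l.2).
split; first exact: latticeB.
by move: sl; rewrite /slit /= !opprB !addrA !subrK.
Qed.
Arguments allowed_latticeD {w h s t x l}.

Lemma not_allowed0 w h s t : 0 <= s -> ~ allowed w h s t (0, 0).
Proof.
by move=> s0; apply; exists (0, 0); split; [apply: lattice0 | rewrite /slit /= subr0 lexx].
Qed.

Lemma cyl_embedded_level_allowed {w h s t C v c eta z} q :
  cyl_embedded w h s t C v c eta -> C z -> cross v q = cross v z -> allowed w h s t q.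
Proof.
move=> [vu [_ [_ [p [strip_allowed _ ->]]]]] [x [xs zx]] qz.
apply: (allowed_latticeD zx); apply: strip_allowed; apply/strip_cross => //.
rewrite crossB qz -crossB.
by rewrite /= !subKr -surjective_pairing; apply/strip_cross.
Qed.

End Plane.

Section CylinderWidth.
Context {R : realType} {w h s t c eta : R} {p v : R * R}.
Hypotheses (w0 : 0 < w) (h0 : 0 < h) (s0 : 0 <= s) (c0 : 0 < c) (eta0 : 0 < eta).
Hypothesis vu : v.1 ^+ 2 + v.2 ^+ 2 = 1.
Hypothesis strip_allowed : strip p v eta `<=` allowed w h s t.
Hypothesis strip_equiv : forall x y, strip p v eta x -> strip p v eta y ->
  (Defs.equiv w h t x y <-> exists k : int, x.1 - y.1 = k%:~R * c * v.1
                                          /\ x.2 - y.2 = k%:~R * c * v.2).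

Let core : R * R := (p.1 - eta / 2 * v.2, p.2 + eta / 2 * v.1).

Let strip_core : strip p v eta core.
Proof.
apply/strip_cross => //.
have -> : cross v core - cross v p = eta / 2 * (v.1 ^+ 2 + v.2 ^+ 2)
  by rewrite /cross /=; ring.
by rewrite vu mulr1 divr_gt0 //= ltr_pdivrMr // ltr_pMr // ltr1n.
Qed.

Let strip_shift l : cross v l = 0 -> strip p v eta (core.1 + l.1, core.2 + l.2).
Proof.
move=> vl; apply/strip_cross => //.
have -> : cross v (core.1 + l.1, core.2 + l.2) = cross v core + cross v l
  by rewrite /cross /=; ring.
by rewrite vl addr0; apply/strip_cross.
Qed.

Let shift_equiv l : Defs.equiv w h t (core.1 + l.1, core.2 + l.2) core <-> lattice w h t l.
Proof. by case: l => l1 l2; rewrite /Defs.equiv /= ![_ + l1]addrC ![_ + l2]addrC !addrK. Qed.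

Lemma lattice_parallelP l : cross v l = 0 ->
  lattice w h t l <-> exists k : int, l = (k%:~R * c * v.1, k%:~R * c * v.2).
Proof.
move=> vl; rewrite -shift_equiv (strip_equiv _ _ (strip_shift _ vl) strip_core).
case: l vl => l1 l2 _ /=; rewrite ![_ + l1]addrC ![_ + l2]addrC !addrK.
by split=> -[k e]; exists k; case: e => -> ->.
Qed.

Lemma cyl_period_lattice : lattice w h t (c * v.1, c * v.2).
Proof.
have cv : cross v (c * v.1, c * v.2) = 0 by rewrite /cross /=; ring.
by apply/(lattice_parallelP _ cv); exists 1; rewrite !mul1r.
Qed.

Context {m n : int}.
Hypotheses (period1 : c * v.1 = m%:~R * w + n%:~R * t) (period2 : c * v.2 = n%:~R * h).

Let period_neq0 : ~ (m = 0 /\ n = 0).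
Proof.
move=> [m0 n0]; move: (lt0r_neq0 c0); rewrite (scaled_unit_eq0 c _ vu) ?eqxx //.
  by rewrite period1 m0 n0 !mul0r addr0.
by rewrite period2 n0 mul0r.
Qed.

Let cross_lattice_coord (m' n' : int) :
  c * cross v (m'%:~R * w + n'%:~R * t, n'%:~R * h) = (m * n' - n * m')%:~R * (w * h).
Proof. by rewrite -(cross_lattice w h t) -period1 -period2 /cross /=; ring. Qed.

(* Lattice vectors parallel to the core are multiples of the period, so the period is primitive. *)
Lemma period_coprime : gcdz m n = 1.
Proof.
have cn0 : c != 0 := lt0r_neq0 c0.
have /dvdzP [m0 em] := dvdz_gcdl m n.
have /dvdzP [n0 en] := dvdz_gcdr m n.
move: em en; set g := gcdz m n => em en.
have hl : lattice w h t (m0%:~R * w + n0%:~R * t, n0%:~R * h) by exists m0, n0.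
have vl : cross v (m0%:~R * w + n0%:~R * t, n0%:~R * h) = 0.
  apply: (mulfI cn0); rewrite mulr0 cross_lattice_coord em en.
  have -> : m0 * g * n0 - n0 * g * m0 = 0 by ring.
  by rewrite mul0r.
have [k [e1 e2]] := (lattice_parallelP _ vl).1 hl.
have [dm dn] : m0 - k * m = 0 /\ n0 - k * n = 0.
  apply: (lattice_coord_eq0 w h t _ _ (lt0r_neq0 w0) (lt0r_neq0 h0)).
    by rewrite !intrB !intrM mulrBl mulrBl addrACA e1 -!mulrA period1; ring.
  by rewrite intrB intrM mulrBl e2 -!mulrA period2 subrr.
have em' : m0 * (1 - k * g) = 0 by rewrite -dm em; ring.
have en' : n0 * (1 - k * g) = 0 by rewrite -dn en; ring.
have kg : 1 - k * g = 0.
  have [m00|m0n] := eqVneq m0 0; last by move/eqP: em'; rewrite mulf_eq0 (negbTE m0n) => /eqP.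
  have n0n : n0 != 0 by apply/eqP => n00; apply: period_neq0; rewrite em en m00 n00 !mul0r.
  by move/eqP: en'; rewrite mulf_eq0 (negbTE n0n) => /eqP.
have g0 : 0 <= g by [].
clearbody g; have [k0|k1] : k <= 0 \/ 1 <= k by lia.
all: nia.
Qed.

Let lattice_cross_int (j : int) :
  exists2 l, lattice w h t l & cross v l = j%:~R * (w * h / c).
Proof.
have [a [b ab]] := Bezoutz m n; rewrite period_coprime in ab.
exists ((j * - b)%:~R * w + (j * a)%:~R * t, (j * a)%:~R * h).
  by exists (j * - b), (j * a).
apply: (mulfI (lt0r_neq0 c0)).
rewrite cross_lattice_coord [RHS]mulrCA [c * _]mulrC divfK ?lt0r_neq0 //.
by congr (_%:~R * _); rewrite -[RHS]mulr1 -ab; ring.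
Qed.

(* Seen transversally to v, the lattice translates of the slit are the intervals
   j (w h / c) + [min 0 (s v.1), max 0 (s v.1)], all of which the strip must avoid. *)
Lemma strip_width_bound : c * eta + s * `|c * v.1| <= w * h.
Proof.
have d0 : 0 < w * h / c by rewrite divr_gt0 // mulr_gt0.
suff bound : eta + s * `|v.1| <= w * h / c.
  rewrite normrM gtr0_norm // mulrCA -mulrDr -(divfK (lt0r_neq0 c0) (w * h)) mulrC.
  by rewrite ler_pM2r.
apply: (progression_gap_le (cross v p - Num.min 0 (s * v.1)) _ _ _ d0 eta0).
  by rewrite mulr_ge0.
move=> j u /(mul_interval_onto _ _ _ s0) [y y_in yv] in_strip.
have [l hl vl] := lattice_cross_int j.
have slit_in_strip : strip p v eta (l.1, y + l.2).
  apply/strip_cross => //.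
  have -> : cross v (l.1, y + l.2) = cross v l + y * v.1 by rewrite /cross /=; ring.
  by rewrite vl yv; move: in_strip => /andP [lo hi]; apply/andP; split; lra.
move/strip_allowed: slit_in_strip; apply; exists l; split => //.
by rewrite /slit /= subrr addrK.
Qed.

End CylinderWidth.

Lemma cyl_embedded_period_width {R : realType} {w h s t c eta : R}
    {C : set (R * R)} {v : R * R} :
  0 < w -> 0 < h -> 0 <= s -> cyl_embedded w h s t C v c eta ->
  exists m n : int, [/\ c * v.1 = m%:~R * w + n%:~R * t, c * v.2 = n%:~R * h
                      & c * eta + s * `|c * v.1| <= w * h].
Proof.
move=> w0 h0 s0 [vu [c0 [eta0 [p [strip_allowed strip_equiv _]]]]].
have [m [n [e1 e2]]] := cyl_period_lattice eta0 vu strip_equiv.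
exists m, n; split=> //.
exact: (strip_width_bound w0 h0 s0 c0 eta0 vu strip_allowed strip_equiv e1 e2).
Qed.

(* The cylinder of P(W,h,s,0) swept by the diagonals from (0,y) to (W,y+h), s < y < h. *)
Definition diag_len {R : realType} (W h : R) : R := Num.sqrt (W ^+ 2 + h ^+ 2).
Definition diag_dir {R : realType} (W h : R) : R * R := (W / diag_len W h, h / diag_len W h).
Definition diag_height {R : realType} (W h s : R) : R := W * (h - s) / diag_len W h.
Definition diag_cyl {R : realType} (W h s : R) : set (R * R) :=
  [set z | exists x, strip (0, s) (diag_dir W h) (diag_height W h s) x
                     /\ Defs.equiv W h 0 z x].

Section DiagonalCylinder.
Context {R : realType} {W h s : R}.
Hypotheses (s0 : 0 < s) (sh : s < h) (W0 : 0 < W).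

Let h0 : 0 < h. Proof. exact: lt_trans sh. Qed.
Let Wh0 : 0 < W * h. Proof. exact: mulr_gt0. Qed.

Lemma diag_len_gt0 : 0 < diag_len W h.
Proof. by rewrite sqrtr_gt0 ltr_wpDr ?sqr_ge0 // exprn_gt0. Qed.

Let len_neq0 : diag_len W h != 0. Proof. exact: lt0r_neq0 diag_len_gt0. Qed.

Lemma diag_height_gt0 : 0 < diag_height W h s.
Proof. by rewrite divr_gt0 ?diag_len_gt0 // mulr_gt0 // subr_gt0. Qed.

Lemma diag_dir_unit : (diag_dir W h).1 ^+ 2 + (diag_dir W h).2 ^+ 2 = 1.
Proof.
rewrite /= !expr_div_n -mulrDl sqr_sqrtr ?addr_ge0 ?sqr_ge0 //.
by rewrite divff // lt0r_neq0 // ltr_wpDr ?sqr_ge0 // exprn_gt0.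
Qed.

Lemma diag_area : diag_len W h * diag_height W h s = W * (h - s).
Proof. by rewrite /diag_height mulrC divfK. Qed.

Lemma cross_diag_dir z : cross (diag_dir W h) z = cross (W, h) z / diag_len W h.
Proof. by rewrite /cross /=; ring. Qed.

Lemma strip_diag x :
  strip (0, s) (diag_dir W h) (diag_height W h s) x <-> s * W < cross (W, h) x < W * h.
Proof.
rewrite (strip_cross _ _ _ _ diag_dir_unit) !cross_diag_dir /diag_height -mulrBl.
rewrite pmulr_lgt0 ?invr_gt0 ?diag_len_gt0 // ltr_pM2r ?invr_gt0 ?diag_len_gt0 //.
rewrite /cross /= mulr0 subr0.
by split=> /andP [lo hi]; apply/andP; split; lra.
Qed.

Let cross_diag_lattice (m n : int) :
  cross (W, h) (m%:~R * W + n%:~R * 0, n%:~R * h) = (n - m)%:~R * (W * h).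
Proof. by rewrite /cross /= intrB; ring. Qed.

Lemma diag_cyl_embedded :
  cyl_embedded W h s 0 (diag_cyl W h s) (diag_dir W h) (diag_len W h) (diag_height W h s).
Proof.
split; first exact: diag_dir_unit.
split; first exact: diag_len_gt0.
split; first exact: diag_height_gt0.
exists (0, s); split => //.
- move=> x /strip_diag /andP [lo hi].
  move=> [[l1 l2] [[m [n /= [e1 e2]]] [/= /eqP sl1 /andP [y0 ys]]]].
  have cx : cross (W, h) x = (n - m)%:~R * (W * h) + W * (x.2 - l2).
    move: sl1; rewrite -cross_diag_lattice -e1 -e2 subr_eq0 => /eqP x1.
    by rewrite /cross x1 /=; ring.
  have Wy0 : 0 <= W * (x.2 - l2) by rewrite pmulr_rge0.
  have Wys : W * (x.2 - l2) <= s * W by rewrite mulrC ler_pM2r.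
  have /int_multiple_small_eq0 nm : `|(n - m)%:~R * (W * h)| < W * h.
    by rewrite ger0_norm; lra.
  by move: lo; rewrite cx (nm Wh0) mul0r add0r; lra.
- have cW : diag_len W h * (W / diag_len W h) = W by rewrite mulrC divfK.
  have ch : diag_len W h * (h / diag_len W h) = h by rewrite mulrC divfK.
  move=> x y /strip_diag /andP [xlo xhi] /strip_diag /andP [ylo yhi]; split.
  + move=> [m [n /= [e1 e2]]].
    have sW0 : 0 <= s * W := mulr_ge0 (ltW s0) (ltW W0).
    have /int_multiple_small_eq0 nm : `|(n - m)%:~R * (W * h)| < W * h.
      by rewrite -cross_diag_lattice -e1 -e2 crossB ltr_norml; apply/andP; split; lra.
    move/eqP: (nm Wh0); rewrite subr_eq0 => /eqP nm'.
    by exists m; rewrite e1 e2 nm' -!mulrA cW ch mulr0 addr0.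
  + move=> [k [e1 e2]]; exists k, k.
    by rewrite /= e1 e2 -!mulrA cW ch mulr0 addr0.
Qed.

(* A larger cylinder is parallel to diag_cyl, since otherwise the level of 0 (a point of
   the slit) would meet it; a point of it outside diag_cyl would then share its level
   with a point of the slit. *)
Lemma diag_cyl_maximal C v c eta : cyl_embedded W h s 0 C v c eta ->
  diag_cyl W h s `<=` C -> C = diag_cyl W h s.
Proof.
move=> emb sub; have [vu _] := emb.
have par : cross (diag_dir W h) v = 0.
  apply/eqP; apply: contraT => nz; exfalso.
  pose lam := (cross (diag_dir W h) (0, s) + diag_height W h s / 2) / cross (diag_dir W h) v.
  have lam_in : diag_cyl W h s (lam * v.1, lam * v.2).
    exists (lam * v.1, lam * v.2); split; last exact: equiv_refl.
    apply/(strip_cross _ _ _ _ diag_dir_unit).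
    have -> : cross (diag_dir W h) (lam * v.1, lam * v.2) = lam * cross (diag_dir W h) v
      by rewrite /cross /=; ring.
    have eta0 := diag_height_gt0.
    by rewrite divfK //; apply/andP; split; lra.
  apply: (not_allowed0 W h s 0 (ltW s0)).
  by apply: (cyl_embedded_level_allowed (0, 0) emb (sub _ lam_in)); rewrite /cross /=; ring.
have level z : cross v z = ((diag_dir W h).1 * v.1 + (diag_dir W h).2 * v.2) *
                           (cross (W, h) z / diag_len W h).
  by rewrite (cross_parallel _ _ _ diag_dir_unit par) cross_diag_dir.
rewrite eqEsubset; split=> // z Cz.
have [K /andP [K1 K2]] := exists_floor_mul (cross (W, h) z) Wh0.
have [su|us] := ltrP (s * W) (cross (W, h) z - K%:~R * (W * h)).
  exists (z.1, z.2 - K%:~R * h); split.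
    apply/strip_diag; rewrite (_ : cross _ _ = cross (W, h) z - K%:~R * (W * h)).
      by apply/andP; split; lra.
    by rewrite /cross /=; ring.
  by exists 0, K; rewrite /= !mul0r add0r subrr; split; ring.
exfalso; pose y := (cross (W, h) z - K%:~R * (W * h)) / W.
have yW : y * W = cross (W, h) z - K%:~R * (W * h) by rewrite divfK ?lt0r_neq0.
have qz : cross v (0, y + K%:~R * h) = cross v z.
  by rewrite !level; congr (_ * (_ / _)); move: yW; rewrite /cross /= => yW; lra.
move/(cyl_embedded_level_allowed _ emb Cz): qz; apply.
exists (0, K%:~R * h); split; first by exists 0, K; rewrite !mul0r add0r mulr0.
rewrite /slit /= subrr addrK; split=> //; apply/andP; split.
  by rewrite -(pmulr_lge0 _ W0) yW; lra.
by rewrite -(ler_pM2r W0) yW.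
Qed.

Lemma diag_cyl_cylinder :
  cylinder W h s 0 (diag_cyl W h s) (diag_dir W h) (diag_len W h) (diag_height W h s).
Proof. by split; [exact: diag_cyl_embedded | exact: diag_cyl_maximal]. Qed.

End DiagonalCylinder.

Lemma isometric_refl {R : realType} (w h s t : R) : isometric w h s t w h s t.
Proof. by exists id; split=> // z zP; exists z; split=> //; apply: equiv_refl. Qed.

Theorem lemma8p1 (R : realType) (h s w1 w2 t : R) :
  0 < s -> s < h -> 0 < w1 -> 0 < w2 -> 0 <= t -> t < w2 ->
  area_surf w1 h >= area_surf w2 h ->
  (forall (L1 : set (R * R)) (v1 : R * R) (c1 eta1 : R),
     cylinder w1 h s 0 L1 v1 c1 eta1 ->
     exists (L2 : set (R * R)) (v2 : R * R) (c2 eta2 : R),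
       cylinder w2 h s t L2 v2 c2 eta2 /\ same_slope v1 v2 /\
       (c1 * eta1) / area_surf w1 h = (c2 * eta2) / area_surf w2 h) ->
  isometric w2 h s t w1 h s 0.
Proof.
move=> s0 sh w10 w20 t0 tw2 area_le same_cyl.
have h0 : 0 < h := lt_trans s0 sh.
have [L2 [v2 [c2 [eta2 [[emb2 _] [slope ratio]]]]]] :=
  same_cyl _ _ _ _ (diag_cyl_cylinder s0 sh w10).
have [m [n [e1 e2 width]]] := cyl_embedded_period_width w20 h0 (ltW s0) emb2.
have [v2u [c20 _]] := emb2.
have horiz : c2 * v2.1 = n%:~R * w1.
  move: slope; rewrite /same_slope -/(cross _ _) cross_diag_dir => /eqP.
  rewrite mulf_eq0 invr_eq0 (negbTE (lt0r_neq0 (diag_len_gt0 w10))) orbF => /eqP slope.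
  have : h * (n%:~R * w1 - c2 * v2.1) = c2 * cross (w1, h) v2.
    by rewrite /cross /= (mulrBr c2) (mulrCA c2 w1) e2; ring.
  by rewrite slope mulr0 => /eqP; rewrite mulf_eq0 (negbTE (lt0r_neq0 h0)) subr_eq0 => /eqP.
have area2 : c2 * eta2 = w2 * (h - s).
  have w2h : w2 * h != 0 by rewrite mulf_neq0 ?lt0r_neq0.
  rewrite -[c2 * eta2](divfK w2h) -ratio diag_area // /area_surf; field.
  by rewrite !lt0r_neq0.
suff [-> ->] : w2 = w1 /\ t = 0 by exact: isometric_refl.
apply: (shear_rigid w10 t0 tw2 _ _ _ (_ : n%:~R * w1 = m%:~R * w2 + n%:~R * t)).
- by move: area_le; rewrite /area_surf ler_pM2r.
- apply/eqP => n0; move: (lt0r_neq0 c20); rewrite (scaled_unit_eq0 c2 _ v2u) ?eqxx //.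
    by rewrite horiz n0 mul0r.
  by rewrite e2 n0 mul0r.
- by rewrite -(ler_pM2l s0); move: width; rewrite area2 horiz; lra.
- by rewrite -horiz e1.
Qed.
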